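(* Let $\mathcal{R}$ be a fusion ring with basis $\{x_1=1,\ldots,x_m\}$ and fusion matrices $M_j$, and for $n\ge1$ let $T_n=\sum_{i=1}^m\|M_i\|^2\big(M_i/\|M_i\|\big)^{\otimes n}$. If $n\ge2$ and $T_n\geq0$, then $T_{n-1}\geq 0$.
   Context: A fusion ring is a ring $\mathcal{R}$ which is a free $\mathbb{Z}$-module with a finite basis $\{x_1=1,\ldots,x_m\}$ such that $x_ix_j=\sum_k N_{ij}^k x_k$ with $N_{ij}^k\in\mathbb{N}$; there is an involution $i\mapsto i^*$ whose $\mathbb{Z}$-linear extension is an anti-involution of $\mathcal{R}$; and the coefficient of $x_1$ in $x_ix_j$ equals $\delta_{i,j^*}$. The fusion matrix is $(M_j)_{k,i}=N_{ji}^k$, $\|M_j\|$ its operator norm on $\mathbb{C}^m$, $\otimes n$ the Kronecker power, and $A\ge0$ means positive semidefinite. *)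

From HB Require Import structures.
From mathcomp Require Import all_boot all_order all_algebra.
From mathcomp Require Import classical_sets reals.
From mathcomp Require Import complex mxtens.
Set Implicit Arguments. Unset Strict Implicit. Unset Printing Implicit Defensive.
Import Order.TTheory GRing.Theory Num.Theory.
Local Open Scope ring_scope.

(* A fusion ring of rank m.+1: basis x_0 = 1, x_1, ..., x_m indexed by 'I_m.+1,
   structure constants x_i x_j = \sum_k N i j k x_k, involution i |-> dual i. *)
Definition is_fusion_ring (m : nat) (N : 'I_m.+1 -> 'I_m.+1 -> 'I_m.+1 -> nat)
    (dual : 'I_m.+1 -> 'I_m.+1) : Prop :=
  [/\
      (forall j k, N ord0 j k = (j == k) :> nat /\ N j ord0 k = (j == k) :> nat),
      (* associativity: (x_i x_j) x_l = x_i (x_j x_l) *)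
      (forall i j l t, (\sum_(k < m.+1) N i j k * N k l t =
                        \sum_(k < m.+1) N j l k * N i k t)%N),
      (forall i, dual (dual i) = i),
      (* its Z-linear extension is an anti-involution: (x_i x_j)^* = x_j^* x_i^* *)
      (forall i j k, N (dual j) (dual i) (dual k) = N i j k) &
      (forall i j, N i j ord0 = (i == dual j) :> nat)].

Section FusionDefs.
Variable R : realType.
Local Notation C := R[i].

Definition fusion_mx (m : nat) (N : 'I_m.+1 -> 'I_m.+1 -> 'I_m.+1 -> nat)
    (j : 'I_m.+1) : 'M[C]_m.+1 :=
  \matrix_(k, i) (N j i k)%:R.

Definition cabs2 (z : C) : R := let: Complex a b := z in a ^+ 2 + b ^+ 2.

Definition vnorm (n : nat) (v : 'cV[C]_n) : R :=
  Num.sqrt (\sum_(i < n) cabs2 (v i 0)).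

Definition opnorm (n : nat) (A : 'M[C]_n) : R :=
  sup [set vnorm (A *m v) | v in [set v : 'cV[C]_n | vnorm v <= 1]].

Definition psd (n : nat) (A : 'M[C]_n) : Prop :=
  forall v : 'cV[C]_n, 0 <= ((map_mx conjc v)^T *m A *m v) 0 0.

Definition Tmx (m : nat) (N : 'I_m.+1 -> 'I_m.+1 -> 'I_m.+1 -> nat) (n : nat)
    : 'M[C]_(m.+1 ^ n) :=
  \sum_(i < m.+1)
     ((opnorm (fusion_mx N i)) ^+ 2)%:C%C *:
       (((opnorm (fusion_mx N i))^-1)%:C%C *: fusion_mx N i) ^t n.

End FusionDefs.

(* Every fusion matrix M_i commutes with the symmetric nonnegative matrix
   B = sum_j R_j of right multiplications, whose column at the unit is
   positive.  The Perron vector d of B (a kernel vector of lambda - B, where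
   lambda is the supremum of the Rayleigh quotients of B) is positive and
   spans that kernel, so it is a common eigenvector of all M_i and M_i^T; by
   the Schur test its eigenvalue is ||M_i||.  For the unit vector w along d
   we get w^* M_i w = ||M_i||, hence the Hermitian form of T_n at w (x) v is
   that of T_(n-1) at v. *)

From mathcomp Require Import all_boot all_order all_algebra.
From mathcomp Require Import classical_sets reals.
From mathcomp Require Import complex mxtens.
From mathcomp Require Import ring lra.
Import Order.TTheory GRing.Theory Num.Theory.
Local Open Scope ring_scope.
Set Implicit Arguments.
Unset Strict Implicit.
Unset Printing Implicit Defensive.

Lemma quadratic_ge0_discr (R : realFieldType) (a b c : R) : 0 <= c ->
  (forall t, 0 <= a + 2 * b * t + c * t ^+ 2) -> b ^+ 2 <= a * c.
Proof.
move=> c_ge0 quad_ge0; have [c_gt0|] := ltrP 0 c.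
  have := mulr_ge0 (ltW c_gt0) (quad_ge0 (- b / c)).
  have -> : c * (a + 2 * b * (- b / c) + c * (- b / c) ^+ 2) = a * c - b ^+ 2.
    by field; rewrite gt_eqF.
  by rewrite subr_ge0.
move=> c_le0; have c0 : c = 0 by apply/le_anti; rewrite c_le0 c_ge0.
subst c.
have [-> | b_neq0] := eqVneq b 0; first by rewrite expr0n mulr0.
have := quad_ge0 (- (`|a| + 1) / (2 * b)).
have -> : 2 * b * (- (`|a| + 1) / (2 * b)) = - (`|a| + 1) by field.
rewrite mul0r addr0; have := ler_norm a; lra.
Qed.

Section RealBilinearForm.
Variables (R : realFieldType) (n : nat).
Implicit Types (X : 'M[R]_n) (u v x : 'rV[R]_n).

Definition bform X u v := (u *m X *m v^T) 0 0.
Definition sqnorm u := \sum_i u 0 i ^+ 2.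

Lemma bformE X u v : bform X u v = \sum_i \sum_j u 0 i * X i j * v 0 j.
Proof.
rewrite /bform mxE; under eq_bigr => j _ do rewrite mxE big_distrl /=.
rewrite exchange_big /=; apply: eq_bigr => i _; apply: eq_bigr => j _.
by rewrite !mxE.
Qed.

Lemma bformDl X u1 u2 v : bform X (u1 + u2) v = bform X u1 v + bform X u2 v.
Proof. by rewrite /bform !mulmxDl mxE. Qed.

Lemma bformDr X u v1 v2 : bform X u (v1 + v2) = bform X u v1 + bform X u v2.
Proof. by rewrite /bform linearD /= mulmxDr mxE. Qed.

Lemma bformZl X a u v : bform X (a *: u) v = a * bform X u v.
Proof. by rewrite /bform -!scalemxAl mxE. Qed.

Lemma bformZr X a u v : bform X u (a *: v) = a * bform X u v.
Proof. by rewrite /bform linearZ /= -scalemxAr mxE. Qed.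

Lemma bformC X u v : X^T = X -> bform X v u = bform X u v.
Proof.
move=> X_sym; rewrite !bformE exchange_big; apply: eq_bigr => i _.
by apply: eq_bigr => j _; rewrite -[in LHS]X_sym mxE; ring.
Qed.

Lemma bform_tr X u : bform X^T u u = bform X u u.
Proof.
rewrite !bformE exchange_big; apply: eq_bigr => i _; apply: eq_bigr => j _.
by rewrite mxE; ring.
Qed.

Lemma bform0l X v : bform X 0 v = 0.
Proof. by rewrite /bform !mul0mx mxE. Qed.

Lemma bform_delta X u j : bform X u (delta_mx 0 j) = (u *m X) 0 j.
Proof.
rewrite /bform mxE (bigD1 j) //= big1 ?addr0; first by rewrite !mxE !eqxx mulr1.
by move=> k k_neq_j; rewrite !mxE (negbTE k_neq_j) andbF mulr0.
Qed.

Lemma bform1 u : bform 1%:M u u = sqnorm u.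
Proof.
rewrite /bform mulmx1 mxE.
by apply: eq_bigr => i _; rewrite !mxE expr2.
Qed.

Lemma bform_scalar_sub a X u v :
  bform (a%:M - X) u v = a * bform 1%:M u v - bform X u v.
Proof.
by rewrite /bform mulmxBr mulmxBl !mul_mx_scalar scale1r -scalemxAl !mxE.
Qed.

Lemma sqnorm0 : sqnorm 0 = 0.
Proof. by rewrite /sqnorm big1 // => i _; rewrite mxE expr0n. Qed.

Lemma sqnorm_delta j : sqnorm (delta_mx 0 j) = 1.
Proof.
rewrite /sqnorm (bigD1 j) //= big1 ?addr0 ?mxE ?eqxx ?expr1n //.
by move=> k k_neq_j; rewrite mxE (negbTE k_neq_j) andbF expr0n.
Qed.

Lemma sqnorm_gt0 u : u != 0 -> 0 < sqnorm u.
Proof.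
move=> u_neq0; rewrite lt_def sumr_ge0 ?andbT => [|i _]; last exact: sqr_ge0.
apply: contra u_neq0; rewrite psumr_eq0 => [/allP u0|i _]; last exact: sqr_ge0.
apply/eqP/rowP => i; rewrite mxE; apply/eqP; rewrite -sqrf_eq0.
by apply: u0; rewrite mem_index_enum.
Qed.

Lemma bform_bound X u : bform X u u <= (\sum_i \sum_j `|X i j|) * sqnorm u.
Proof.
have coef_le k : u 0 k ^+ 2 <= sqnorm u.
  by rewrite /sqnorm (bigD1 k) //= lerDl sumr_ge0 // => l _; apply: sqr_ge0.
have amgm i j : `|u 0 i| * `|u 0 j| <= sqnorm u.
  have := sqr_ge0 (`|u 0 i| - `|u 0 j|); rewrite sqrrB !real_normK ?num_real //.
  have := coef_le i; have := coef_le j; rewrite -mulr_natr; lra.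
rewrite bformE.
rewrite mulr_suml; apply: ler_sum => i _.
rewrite mulr_suml; apply: ler_sum => j _.
apply: le_trans (ler_norm _) _; rewrite !normrM.
have -> : `|u 0 i| * `|X i j| * `|u 0 j| = `|X i j| * (`|u 0 i| * `|u 0 j|).
  by ring.
exact: ler_wpM2l.
Qed.

Lemma eigval_tr_eq X u a b :
  u != 0 -> u *m X = a *: u -> u *m X^T = b *: u -> a = b.
Proof.
move=> u_neq0 uX uXt; apply: (mulIf (lt0r_neq0 (sqnorm_gt0 u_neq0))).
have bform_eig Y c : u *m Y = c *: u -> bform Y u u = c * sqnorm u.
  by move=> uY; rewrite -bform1 /bform uY mulmx1 -scalemxAl mxE.
by rewrite -(bform_eig _ _ uX) -(bform_eig _ _ uXt) bform_tr.
Qed.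

Section PsdForm.
Variable X : 'M[R]_n.
Hypotheses (X_sym : X^T = X) (X_psd : forall x, 0 <= bform X x x).

Lemma bform_CauchySchwarz u v : bform X u v ^+ 2 <= bform X u u * bform X v v.
Proof.
apply: quadratic_ge0_discr; first exact: X_psd.
move=> t; have := X_psd (u + t *: v).
by rewrite !bformDl !bformDr !bformZl !bformZr (bformC _ _ X_sym); lra.
Qed.

Lemma psd_bform_eq0 u : bform X u u = 0 -> u *m X = 0.
Proof.
move=> Xu0; apply/rowP => j; rewrite [RHS]mxE -bform_delta.
have := bform_CauchySchwarz u (delta_mx 0 j); rewrite Xu0 mul0r.
by move=> le0; apply/eqP; rewrite -sqrf_eq0 eq_le le0 sqr_ge0.
Qed.

(* Cauchy-Schwarz for [X] at [x X^-1] and [x] bounds [sqnorm x ^+ 2]. *)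
Lemma psd_unitmx_coercive : X \in unitmx ->
  exists2 K, 0 < K & forall x, sqnorm x <= K * bform X x x.
Proof.
move=> X_unit; set Y := invmx X.
have Y_sym : Y^T = Y by rewrite /Y trmx_inv X_sym.
set K := \sum_i \sum_j `|Y i j|.
have K_ge0 : 0 <= K by rewrite !sumr_ge0 // => *; rewrite sumr_ge0.
exists (K + 1); first by rewrite ltr_wpDl.
move=> x; have Xx_ge0 := X_psd x.
have [->|x_neq0] := eqVneq x 0; first by rewrite sqnorm0 mulr_ge0 ?addr_ge0.
have sqnorm_sqr_le : sqnorm x ^+ 2 <= bform Y x x * bform X x x.
  have -> : sqnorm x = bform X (x *m Y) x.
    by rewrite -bform1 /bform -(mulmxA x Y) mulVmx.
  have <- : bform X (x *m Y) (x *m Y) = bform Y x x.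
    by rewrite /bform trmx_mul Y_sym -!mulmxA (mulmxA X) mulmxV ?mul1mx.
  exact: bform_CauchySchwarz.
have := le_trans sqnorm_sqr_le (ler_wpM2r Xx_ge0 (bform_bound Y x)).
have := sqnorm_gt0 x_neq0; move: (sqnorm x) => s s_gt0.
rewrite expr2 -/K -mulrA mulrCA ler_pM2l // mulrDl mul1r; lra.
Qed.

End PsdForm.

End RealBilinearForm.

Section SymmetricPerron.
Variables (R : realType) (n : nat) (B : 'M[R]_n) (z : 'I_n).
Hypotheses (B_sym : B^T = B) (B_ge0 : forall i j, 0 <= B i j)
  (B_col_gt0 : forall k, 0 < B k z).
Implicit Types u x : 'rV[R]_n.

Definition rayleigh_quotients :=
  [set bform B x x / sqnorm x | x in [set x : 'rV[R]_n | x != 0]]%classic.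

Definition perron_root := sup rayleigh_quotients.

Lemma rayleigh_quotients_ubound :
  ubound rayleigh_quotients (\sum_i \sum_j `|B i j|).
Proof.
by move=> _ [x /= x_neq0 <-]; rewrite ler_pdivrMr ?sqnorm_gt0 ?bform_bound.
Qed.

Lemma bform_le_perron_root x : bform B x x <= perron_root * sqnorm x.
Proof.
have [->|x_neq0] := eqVneq x 0; first by rewrite bform0l sqnorm0 mulr0.
rewrite -ler_pdivrMr ?sqnorm_gt0 //; apply: ub_le_sup; last by exists x.
by exists (\sum_i \sum_j `|B i j|); apply: rayleigh_quotients_ubound.
Qed.

Lemma perron_root_gt0 : 0 < perron_root.
Proof.
apply: lt_le_trans (B_col_gt0 z) _.
have := bform_le_perron_root (delta_mx 0 z).
rewrite sqnorm_delta mulr1 bform_delta.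
by rewrite -rowE mxE.
Qed.

Definition perron_gap := perron_root%:M - B.

Lemma perron_gap_sym : perron_gap^T = perron_gap.
Proof. by rewrite /perron_gap linearB /= tr_scalar_mx B_sym. Qed.

Lemma perron_gap_psd x : 0 <= bform perron_gap x x.
Proof. by rewrite bform_scalar_sub bform1 subr_ge0 bform_le_perron_root. Qed.

(* An invertible gap would dominate [K^-1] times the identity, so
   [perron_root - K^-1] would still bound the Rayleigh quotients. *)
Lemma perron_gap_singular : \det perron_gap = 0.
Proof.
apply/eqP; apply: contraT => det_neq0.
have gap_unit : perron_gap \in unitmx by rewrite unitmxE unitfE.
have [K K_gt0 coercive] :=
  psd_unitmx_coercive perron_gap_sym perron_gap_psd gap_unit.
have ez_neq0 : (delta_mx 0 z : 'rV[R]_n) != 0.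
  apply: contra_neq (@oner_neq0 R) => ez0.
  by rewrite -(sqnorm_delta R z) ez0 sqnorm0.
have : perron_root <= perron_root - K^-1.
  apply: ge_sup; first by exists (bform B (delta_mx 0 z) (delta_mx 0 z)
    / sqnorm (delta_mx 0 z)), (delta_mx 0 z).
  move=> _ [x /= x_neq0 <-]; rewrite ler_pdivrMr ?sqnorm_gt0 //.
  have := coercive x; rewrite bform_scalar_sub bform1 => le_s.
  rewrite -(ler_pM2l K_gt0) mulrA mulrBr mulfV ?gt_eqF //.
  move: le_s; move: (sqnorm x) (bform B x x) => s b; nra.
by have := invr_gt0 K; rewrite K_gt0; lra.
Qed.

Lemma perron_gap_kerE u k : u *m perron_gap = 0 ->
  \sum_i u 0 i * B i k = perron_root * u 0 k.
Proof.
move=> /rowP /(_ k); rewrite /perron_gap mulmxBr mul_mx_scalar !mxE.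
by move=> /eqP; rewrite subr_eq0 => /eqP <-.
Qed.

Lemma perron_gap_ker_norm u :
  u *m perron_gap = 0 -> map_mx Num.norm u *m perron_gap = 0.
Proof.
move=> u_ker; apply: (psd_bform_eq0 perron_gap_sym perron_gap_psd).
apply/eqP; rewrite eq_le perron_gap_psd andbT.
have <- : bform perron_gap u u = 0 by rewrite /bform u_ker !mul0mx mxE.
rewrite !bform_scalar_sub !bform1.
have -> : sqnorm (map_mx Num.norm u) = sqnorm u.
  by apply: eq_bigr => i _; rewrite mxE real_normK ?num_real.
rewrite lerD2l lerN2 !bformE; apply: ler_sum => i _; apply: ler_sum => j _.
rewrite !mxE; apply: le_trans (ler_norm _) _.
by rewrite !normrM (ger0_norm (B_ge0 i j)).
Qed.

Lemma perron_gap_ker_gt0 u : u *m perron_gap = 0 ->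
  (forall i, 0 <= u 0 i) -> u != 0 -> forall i, 0 < u 0 i.
Proof.
move=> u_ker u_ge0 u_neq0.
have [j uj_neq0] : exists j, u 0 j != 0.
  apply/existsP; apply: contraR u_neq0; rewrite negb_exists => /forallP u0.
  by apply/eqP/rowP => i; rewrite mxE; apply/eqP/negPn/u0.
have uz_gt0 : 0 < u 0 z.
  rewrite -(pmulr_rgt0 _ perron_root_gt0) -perron_gap_kerE //.
  rewrite (bigD1 j) //=; apply: ltr_pwDl; last first.
    by apply: sumr_ge0 => i _; rewrite mulr_ge0.
  by rewrite mulr_gt0 // lt_def uj_neq0 u_ge0.
move=> k; rewrite -(pmulr_rgt0 _ perron_root_gt0) -perron_gap_kerE //.
rewrite (bigD1 z) //=; apply: ltr_pwDl; last first.
  by apply: sumr_ge0 => i _; rewrite mulr_ge0.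
by rewrite mulr_gt0 // -[B]B_sym mxE.
Qed.

(* Subtracting the largest multiple of [x] below [u] leaves a nonnegative
   kernel vector with a zero entry, which must vanish. *)
Lemma perron_gap_ker_line x u : x *m perron_gap = 0 -> (forall i, 0 < x 0 i) ->
  u *m perron_gap = 0 -> exists c, u = c *: x.
Proof.
move=> x_ker x_gt0 u_ker.
have [j _ j_min] := @arg_minP _ _ _ z xpredT (fun i => u 0 i / x 0 i) erefl.
exists (u 0 j / x 0 j); apply/eqP; rewrite -subr_eq0; apply/eqP.
set y := u - _ *: x.
have y_ker : y *m perron_gap = 0.
  by rewrite /y mulmxBl -scalemxAl x_ker u_ker scaler0 subr0.
have y_ge0 i : 0 <= y 0 i.
  by rewrite !mxE subr_ge0 -ler_pdivlMr ?j_min.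
apply/eqP; apply: contraT => y_neq0.
have := perron_gap_ker_gt0 y_ker y_ge0 y_neq0 j.
by rewrite !mxE divfK ?subrr ?ltxx ?gt_eqF.
Qed.

Lemma perron_vector : exists d : 'rV[R]_n, (forall i, 0 < d 0 i) /\
  forall X, X *m B = B *m X -> exists c, d *m X = c *: d.
Proof.
have /det0P [v v_neq0 v_ker] : \det perron_gap == 0.
  by rewrite perron_gap_singular.
set d := map_mx Num.norm v.
have d_ker : d *m perron_gap = 0 by apply: perron_gap_ker_norm.
have d_gt0 : forall i, 0 < d 0 i.
  apply: perron_gap_ker_gt0 => // [i|]; first by rewrite mxE.
  apply: contra v_neq0 => /eqP /rowP d0; apply/eqP/rowP => i.
  by have := d0 i; rewrite !mxE => /normr0_eq0.
exists d; split => // X XB; apply: (perron_gap_ker_line d_ker d_gt0).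
rewrite -mulmxA; have -> : X *m perron_gap = perron_gap *m X.
  by rewrite /perron_gap mulmxBr mulmxBl XB mul_mx_scalar mul_scalar_mx.
by rewrite mulmxA d_ker mul0mx.
Qed.

End SymmetricPerron.

Section SchurTest.
Variables (R : realFieldType) (n : nat).

Lemma weighted_CauchySchwarz (a d x : 'I_n -> R) :
  (forall j, 0 <= a j) -> (forall j, 0 < d j) ->
  (\sum_j a j * x j) ^+ 2 <= (\sum_j a j * d j) * (\sum_j a j * x j ^+ 2 / d j).
Proof.
move=> a_ge0 d_gt0.
set S1 := \sum_j a j * d j; set S2 := \sum_j a j * x j ^+ 2 / d j.
set S3 := \sum_j a j * x j.
have shifted_sum t :
    \sum_j a j * (x j - t * d j) ^+ 2 / d j = S2 + 2 * (- S3) * t + S1 * t ^+ 2.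
  have expand j : a j * (x j - t * d j) ^+ 2 / d j =
      a j * x j ^+ 2 / d j - 2 * t * (a j * x j) + t ^+ 2 * (a j * d j).
    by field; rewrite gt_eqF.
  under eq_bigr => j _ do rewrite expand.
  by rewrite !big_split /= sumrN -!mulr_sumr /S1 /S2 /S3; ring.
rewrite -sqrrN mulrC; apply: quadratic_ge0_discr => [|t].
  by apply: sumr_ge0 => j _; apply: mulr_ge0 (a_ge0 j) (ltW (d_gt0 j)).
rewrite -shifted_sum; apply: sumr_ge0 => j _.
by apply: divr_ge0; [apply: mulr_ge0 (a_ge0 j) (sqr_ge0 _) | apply: ltW].
Qed.

Lemma schur_test (A : 'M[R]_n) (d : 'I_n -> R) (c : R) (x : 'I_n -> R) :
  (forall i j, 0 <= A i j) -> (forall j, 0 < d j) ->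
  (forall k, \sum_j A k j * d j = c * d k) ->
  (forall j, \sum_k d k * A k j = c * d j) ->
  \sum_k (\sum_j A k j * x j) ^+ 2 <= c ^+ 2 * \sum_j x j ^+ 2.
Proof.
move=> A_ge0 d_gt0 A_col A_row.
apply: le_trans (_ : \sum_k (\sum_j A k j * d j) *
                       (\sum_j A k j * x j ^+ 2 / d j) <= _).
  by apply: ler_sum => k _; apply: weighted_CauchySchwarz.
under eq_bigr => k _ do rewrite A_col mulr_sumr.
rewrite exchange_big /= mulr_sumr le_eqVlt; apply/orP; left; apply/eqP.
apply: eq_bigr => j _.
have -> : \sum_k c * d k * (A k j * x j ^+ 2 / d j) =
          c * (x j ^+ 2 / d j) * \sum_k d k * A k j.
  by rewrite mulr_sumr; apply: eq_bigr => k _; ring.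
by rewrite A_row; field; rewrite gt_eqF.
Qed.

End SchurTest.

Section HermitianForm.
Variable R : rcfType.
Local Notation C := R[i].

Definition hform k (A : 'M[C]_k) (v : 'cV[C]_k) : C :=
  ((map_mx conjc v)^T *m A *m v) 0 0.

Lemma hform_sum k (I : finType) (F : I -> 'M[C]_k) v :
  hform (\sum_i F i) v = \sum_i hform (F i) v.
Proof. by rewrite /hform mulmx_sumr mulmx_suml summxE. Qed.

Lemma hformZ k a (A : 'M[C]_k) v : hform (a *: A) v = a * hform A v.
Proof. by rewrite /hform -scalemxAr -scalemxAl mxE. Qed.

Lemma hform_tens p q (A : 'M[C]_p) (B : 'M[C]_q) (w : 'cV[C]_p) (v : 'cV[C]_q) :
  hform (A *t B) (w *t v) = hform A w * hform B v.
Proof.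
(* [w *t v] has [1 * 1] columns; expose it so that [trmx_tens] applies. *)
rewrite /hform; set rhs := _ * _.
change ((((map_mx conjc (w *t v))^T : 'M_(1 * 1, p * q))
  *m (A *t B) *m (w *t v)) 0 0 = rhs).
have -> : map_mx conjc (w *t v) = map_mx conjc w *t map_mx conjc v.
  by apply/matrixP => i j; rewrite !mxE rmorphM.
rewrite trmx_tens !tensmx_mul mxE /rhs.
by rewrite [(mxtens_unindex _).1]ord1 [(mxtens_unindex _).2]ord1.
Qed.

End HermitianForm.

Section PerronOperatorNorm.
Variables (R : realType) (n : nat) (A : 'M[R]_n.+1) (d : 'I_n.+1 -> R) (c : R).
Hypotheses (A_ge0 : forall i j, 0 <= A i j) (d_gt0 : forall j, 0 < d j)
  (A_col : forall k, \sum_j A k j * d j = c * d k)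
  (A_row : forall j, \sum_k d k * A k j = c * d j).
Local Notation C := R[i].
Local Notation AC := (map_mx (real_complex R) A).

Definition unit_col : 'cV[C]_n.+1 :=
  \col_k ((d k / Num.sqrt (\sum_j d j ^+ 2))%:C)%C.

Lemma cabs2E (x : C) : cabs2 x = complex.Re x ^+ 2 + complex.Im x ^+ 2.
Proof. by case: x. Qed.

Lemma vnorm_real (x : 'I_n.+1 -> R) :
  vnorm (\col_k (x k)%:C)%C = Num.sqrt (\sum_k x k ^+ 2).
Proof.
by congr Num.sqrt; apply: eq_bigr => k _; rewrite mxE cabs2E expr0n addr0.
Qed.

Lemma sum_unit_col_sqr : \sum_k (d k / Num.sqrt (\sum_j d j ^+ 2)) ^+ 2 = 1.
Proof.
have S_gt0 : 0 < \sum_j d j ^+ 2.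
  rewrite (bigD1 ord0) //= ltr_pwDl ?exprn_gt0 //.
  by rewrite sumr_ge0 // => j _; rewrite sqr_ge0.
under eq_bigr => k _ do rewrite expr_div_n sqr_sqrtr ?ltW //.
by rewrite -mulr_suml mulfV ?gt_eqF.
Qed.

Lemma vnorm_unit_col : vnorm unit_col = 1.
Proof. by rewrite vnorm_real sum_unit_col_sqr sqrtr1. Qed.

Lemma perron_eig_ge0 : 0 <= c.
Proof.
rewrite -(pmulr_lge0 _ (d_gt0 ord0)) -A_col.
by apply: sumr_ge0 => j _; rewrite mulr_ge0 ?A_ge0 // ltW.
Qed.

Lemma mul_unit_col : AC *m unit_col = c%:C%C *: unit_col.
Proof.
apply/matrixP => k l; rewrite /unit_col !mxE -rmorphM mulrA -A_col.
rewrite mulr_suml rmorph_sum.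
by apply: eq_bigr => j _; rewrite !mxE -mulrA -rmorphM.
Qed.

Lemma vnorm_mul_unit_col : vnorm (AC *m unit_col) = c.
Proof.
have -> : AC *m unit_col =
    \col_k ((c * (d k / Num.sqrt (\sum_j d j ^+ 2)))%:C)%C.
  by apply/matrixP => k l; rewrite mul_unit_col /unit_col !mxE [RHS]rmorphM.
rewrite vnorm_real; under eq_bigr => k _ do rewrite exprMn.
rewrite -mulr_sumr sum_unit_col_sqr mulr1 sqrtr_sqr.
exact/ger0_norm/perron_eig_ge0.
Qed.

Lemma vnorm_mul_le v : vnorm (AC *m v) <= c * vnorm v.
Proof.
have cabs2_mul k : cabs2 ((AC *m v) k 0) =
    (\sum_j A k j * complex.Re (v j 0)) ^+ 2 +
    (\sum_j A k j * complex.Im (v j 0)) ^+ 2.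
  rewrite cabs2E mxE !raddf_sum; congr (_ ^+ 2 + _ ^+ 2);
    apply: eq_bigr => j _; rewrite mxE; case: (v j 0) => a b /=.
    by rewrite mul0r subr0.
  by rewrite mul0r addr0.
have c_ge0 := perron_eig_ge0.
have v_ge0 : 0 <= \sum_k cabs2 (v k 0).
  by apply: sumr_ge0 => k _; rewrite cabs2E addr_ge0 ?sqr_ge0.
rewrite /vnorm -[c](ger0_norm perron_eig_ge0) -sqrtr_sqr -sqrtrM ?sqr_ge0 //.
rewrite ler_sqrt ?mulr_ge0 ?sqr_ge0 //.
under eq_bigr => k _ do rewrite cabs2_mul.
under [X in _ <= _ * X]eq_bigr => k _ do rewrite cabs2E.
rewrite !big_split /= mulrDr.
by apply: lerD; exact: schur_test A_ge0 d_gt0 A_col A_row.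
Qed.

Lemma opnorm_perron : opnorm AC = c.
Proof.
have c_ub : ubound [set vnorm (AC *m v) | v in
    [set v : 'cV[C]_n.+1 | vnorm v <= 1]]%classic c.
  move=> _ [v /= v_le1 <-]; apply: le_trans (vnorm_mul_le v) _.
  by rewrite -[leRHS]mulr1 ler_wpM2l ?perron_eig_ge0.
apply/le_anti/andP; split.
  apply: ge_sup => //; exists (vnorm (AC *m unit_col)), unit_col => //=.
  by rewrite vnorm_unit_col.
apply: ub_le_sup; first by exists c.
by exists unit_col; rewrite /= ?vnorm_unit_col ?vnorm_mul_unit_col.
Qed.

Lemma hform_perron : hform AC unit_col = c%:C%C.
Proof.
have conj_unit_col : map_mx conjc unit_col = unit_col.
  by apply/matrixP => k l; rewrite !mxE conjc_real.
rewrite /hform -mulmxA mul_unit_col -scalemxAr mxE conj_unit_col.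
rewrite -[RHS]mulr1 -(rmorph1 (real_complex R)) -sum_unit_col_sqr.
rewrite rmorph_sum mxE; congr (_ * _); apply: eq_bigr => k _.
by rewrite /unit_col !mxE expr2 [RHS]rmorphM.
Qed.

End PerronOperatorNorm.

Section FusionRing.
Variables (R : realType) (m : nat) (N : 'I_m.+1 -> 'I_m.+1 -> 'I_m.+1 -> nat)
  (dual : 'I_m.+1 -> 'I_m.+1).
Hypothesis FR : is_fusion_ring N dual.

Let N_unitl j k : N ord0 j k = (j == k).
Proof. by case: FR => H _ _ _ _; case: (H j k). Qed.

Let N_assoc i j l t :
  (\sum_(k < m.+1) N i j k * N k l t = \sum_(k < m.+1) N j l k * N i k t)%N.
Proof. by case: FR => _ H _ _ _; apply: H. Qed.

Let dualK : involutive dual.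
Proof. by case: FR. Qed.

Let N_dual i j k : N (dual j) (dual i) (dual k) = N i j k.
Proof. by case: FR => _ _ _ H _; apply: H. Qed.

Let N_unit_coef i j : N i j ord0 = (i == dual j).
Proof. by case: FR => _ _ _ _ H; apply: H. Qed.

Lemma fusion_frobenius a b c : N a b c = N b (dual c) (dual a).
Proof.
have := N_assoc a b (dual c) ord0.
under eq_bigr => k _ do rewrite N_unit_coef dualK.
rewrite (bigD1 c) //= eqxx muln1 big1 ?addn0 => [->|k /negbTE->]; last first.
  by rewrite muln0.
rewrite (bigD1 (dual a)) //= N_unit_coef dualK eqxx muln1 big1 ?addn0 //.
move=> k k_neq; rewrite N_unit_coef -(inj_eq (can_inj dualK)) dualK eq_sym.
by rewrite (negbTE k_neq) muln0.
Qed.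

Definition lmul_mx i : 'M[R]_m.+1 := \matrix_(k, j) (N i j k)%:R.
Definition rmul_mx j : 'M[R]_m.+1 := \matrix_(k, i) (N i j k)%:R.
Definition rmul_sum := \sum_j rmul_mx j.

Lemma lmul_mx_ge0 i k j : 0 <= lmul_mx i k j.
Proof. by rewrite mxE ler0n. Qed.

Lemma rmul_sumE k i : rmul_sum k i = \sum_j (N i j k)%:R.
Proof. by rewrite summxE; apply: eq_bigr => j _; rewrite mxE. Qed.

Lemma rmul_sum_sym : rmul_sum^T = rmul_sum.
Proof.
apply/matrixP => k i; rewrite mxE !rmul_sumE (reindex_inj (can_inj dualK)) /=.
by apply: eq_bigr => j _; rewrite fusion_frobenius N_dual.
Qed.

Lemma rmul_sum_ge0 k i : 0 <= rmul_sum k i.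
Proof. by rewrite rmul_sumE sumr_ge0. Qed.

Lemma rmul_sum_unit_gt0 k : 0 < rmul_sum k ord0.
Proof.
rewrite rmul_sumE (bigD1 k) //= N_unitl eqxx ltr_pwDl //.
by rewrite sumr_ge0.
Qed.

Lemma lmul_rmul_comm i j : lmul_mx i *m rmul_mx j = rmul_mx j *m lmul_mx i.
Proof.
apply/matrixP => k l; rewrite !mxE.
under eq_bigr => p _ do rewrite !mxE -natrM mulnC.
under [RHS]eq_bigr => p _ do rewrite !mxE -natrM mulnC.
by rewrite -!natr_sum N_assoc.
Qed.

Lemma lmul_rmul_sum_comm i : lmul_mx i *m rmul_sum = rmul_sum *m lmul_mx i.
Proof.
by rewrite mulmx_sumr mulmx_suml; apply: eq_bigr => j _; apply: lmul_rmul_comm.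
Qed.

Lemma fusion_mx_real i : fusion_mx R N i = map_mx (real_complex R) (lmul_mx i).
Proof. by apply/matrixP => k j; rewrite !mxE rmorph_nat. Qed.

Lemma fusion_perron_vector : exists d : 'I_m.+1 -> R, (forall j, 0 < d j) /\
  forall i, exists c,
    (forall k, \sum_j lmul_mx i k j * d j = c * d k) /\
    (forall j, \sum_k d k * lmul_mx i k j = c * d j).
Proof.
have [d [d_gt0 d_eig]] :=
  perron_vector rmul_sum_sym rmul_sum_ge0 rmul_sum_unit_gt0.
exists (d 0); split => // i.
have [c dL] := d_eig _ (lmul_rmul_sum_comm i).
have [c' dLt] : exists c', d *m (lmul_mx i)^T = c' *: d.
  apply: d_eig; apply: trmx_inj.
  by rewrite !trmx_mul trmxK rmul_sum_sym lmul_rmul_sum_comm.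
have d_neq0 : d != 0.
  by apply: contraTneq (d_gt0 ord0) => ->; rewrite mxE ltxx.
have c_eq := eigval_tr_eq d_neq0 dL dLt; subst c'.
exists c; split => [k | j].
  have /rowP /(_ k) := dLt; rewrite !mxE => <-.
  by apply: eq_bigr => j _; rewrite [(lmul_mx i)^T j k]mxE mulrC.
by have /rowP /(_ j) := dL; rewrite !mxE.
Qed.

End FusionRing.

Lemma hform_Tmx_tens (R : realType) (m : nat)
    (N : 'I_m.+1 -> 'I_m.+1 -> 'I_m.+1 -> nat) (n : nat)
    (w : 'cV[R[i]]_m.+1) (v : 'cV[R[i]]_(m.+1 ^ n.+1)) :
  (forall i, hform (fusion_mx R N i) w = (opnorm (fusion_mx R N i))%:C%C) ->
  hform (Tmx R N n.+2) (w *t v) = hform (Tmx R N n.+1) v.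
Proof.
move=> w_eig; rewrite /Tmx !hform_sum; apply: eq_bigr => i _.
rewrite !hformZ ntensmxSS hform_tens hformZ w_eig -rmorphM.
(* For [o = 0] both summands vanish, as [0^-1 = 0]. *)
set o := opnorm _; have [->|o_neq0] := eqVneq o 0.
  by rewrite expr0n /= !mul0r.
by rewrite mulVf // mul1r.
Qed.

Theorem mainTheorem17 (R : realType) (m : nat)
    (N : 'I_m.+1 -> 'I_m.+1 -> 'I_m.+1 -> nat) (dual : 'I_m.+1 -> 'I_m.+1)
    (n : nat) :
  is_fusion_ring N dual -> (2 <= n)%N ->
  psd (Tmx R N n) -> psd (Tmx R N n.-1).
Proof.
move=> FR n_ge2 T_psd.
have [d [d_gt0 d_eig]] := fusion_perron_vector R FR.
have unit_col_eig i : hform (fusion_mx R N i) (unit_col d) =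
    (opnorm (fusion_mx R N i))%:C%C.
  have [c [col_eig row_eig]] := d_eig i.
  have L_ge0 := @lmul_mx_ge0 R m N i.
  rewrite fusion_mx_real (opnorm_perron L_ge0 d_gt0 col_eig row_eig).
  exact: hform_perron d_gt0 col_eig.
case: n n_ge2 T_psd => [|[|n]] // _ T_psd v.
change (0 <= hform (Tmx R N n.+1) v).
by rewrite -(hform_Tmx_tens v unit_col_eig); apply: T_psd.
Qed.
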